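(* For $n\ge2$ and $u_1,\dots,u_n\in\mathcal B$, the Boolean cumulant satisfies $B_n[X(u_1),\dots,X(u_n)]=\sum_{\pi\in\widetilde{\mathrm{NC}}_{ns}(n)}\langle W_M(\pi)\Omega,\Omega\rangle_{\gamma,\phi}$, and for $n=1$ the Boolean cumulant $B_1[X(u_1)]$ is zero.
   Context: Let $\mathcal B$ be a unital $*$-algebra with star-linear maps $\phi:\mathcal B\to\mathbb C$, $\gamma:\mathcal B\to\mathcal B$, $\Lambda:\mathcal B\otimes_{alg}\mathcal B\to\mathcal B$, where $\phi$ is positive and faithful and $\gamma+\phi$ is completely positive, with $(\gamma+\phi)[b]:=\gamma[b]+\phi[b]1_{\mathcal B}$. Assume $\phi[v^*\Lambda(b\otimes u)]=\phi[\Lambda(b^*\otimes v)^*u]$ and $\gamma[v^*\Lambda(b\otimes u)]=\gamma[\Lambda(b^*\otimes v)^*u]$ for all $b,u,v$. On $\mathcal F_{alg}(\mathcal B)=\mathbb C\Omega\oplus\bigoplus_{n\ge1}\mathcal B^{\otimes n}$ use the form $\langle\Omega,\Omega\rangle_{\gamma,\phi}=1$, $\langle u_1\otimes\cdots\otimes u_n,v_1\otimes\cdots\otimes v_k\rangle_{\gamma,\phi}=\delta_{n=k}\phi[v_n^*(\gamma+\phi)[v_{n-1}^*\cdots(\gamma+\phi)[v_1^*u_1]\cdots u_{n-1}]u_n]$. For $b\in\mathcal B$: $a^+(b)\Omega=b$, $a^+(b)(u_1\otimes\cdots\otimes u_n)=b\otimes u_1\otimes\cdots\otimes u_n$; $a^-(b)\Omega=0$,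 $a^-(b)u_1=\phi[bu_1]\Omega$, $a^-(b)(u_1\otimes\cdots\otimes u_n)=(\gamma+\phi)[bu_1]u_2\otimes\cdots\otimes u_n$ ($n\ge2$); $a^0(b)\Omega=0$, $a^0(b)(u_1\otimes\cdots\otimes u_n)=\Lambda(b\otimes u_1)\otimes u_2\otimes\cdots\otimes u_n$; $X(b)=a^+(b)+a^-(b)+a^0(b)$. Boolean cumulants $B_k$ of operators $Y_1,\dots,Y_n$ with respect to the vacuum state $\psi(A)=\langle A\Omega,\Omega\rangle_{\gamma,\phi}$ are the multilinear functionals defined by $\psi[Y_1\cdots Y_n]=\sum_{\pi\in\mathrm{Int}(n)}\prod_{V\in\pi}B_{|V|}[Y_{V(1)},\dots,Y_{V(|V|)}]$, where $\mathrm{Int}(n)$ is the set of interval partitions of $\{1,\dots,n\}$. $\widetilde{\mathrm{NC}}_{ns}(n)$ is the set of noncrossing partitions of $\{1,\dots,n\}$ with no singleton blocks in which $1$ and $n$ lie in the same block. In a block the smallest element is opening, the largest closing, others middle; $W_M(\pi)=a_1(u_1)\cdots a_n(u_n)$ with $a_i=a^-$ (opening), $a^+$ (closing), $a^0$ (middle). *)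

From HB Require Import structures.
From mathcomp Require Import all_boot all_order all_algebra.
Set Implicit Arguments. Unset Strict Implicit. Unset Printing Implicit Defensive.
Import Order.TTheory GRing.Theory Num.Theory.
Local Open Scope ring_scope.

Section FockDefs.
Variables (C : numClosedFieldType) (B : algType C).

Definition star_algebra (star : B -> B) : Prop :=
  [/\ forall x, star (star x) = x,
      forall x y, star (x + y) = star x + star y,
      forall (a : C) x, star (a *: x) = a^* *: star x &
      forall x y, star (x * y) = star y * star x].

Definition star_linear_functional (star : B -> B) (phi : B -> C) : Prop :=
  (forall (a : C) x y, phi (a *: x + y) = a * phi x + phi y) /\
  (forall x, phi (star x) = (phi x)^*).

Definition star_linear_map (star : B -> B) (g : B -> B) : Prop :=
  (forall (a : C) x y, g (a *: x + y) = a *: g x + g y) /\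
  (forall x, g (star x) = star (g x)).

(* a star-linear map B (x)_alg B -> B, given by its values L b u = Lambda(b (x) u):
   bilinear, and star-preserving for the involution (b (x) u)^* = b^* (x) u^* *)
Definition star_linear_tensor (star : B -> B) (L : B -> B -> B) : Prop :=
  [/\ forall (a : C) x y u, L (a *: x + y) u = a *: L x u + L y u,
      forall (a : C) b u v, L b (a *: u + v) = a *: L b u + L b v &
      forall b u, L (star b) (star u) = star (L b u)].

Definition positive_functional (star : B -> B) (phi : B -> C) : Prop :=
  forall b, 0 <= phi (star b * b).

Definition faithful_functional (star : B -> B) (phi : B -> C) : Prop :=
  forall b, phi (star b * b) = 0 -> b = 0.

Definition gamma_plus_phi (gamma : B -> B) (phi : B -> C) (b : B) : B :=
  gamma b + phi b *: 1.

Definition mx_adj (star : B -> B) n (A : 'M[B]_n) : 'M[B]_n := map_mx star A^T.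

Definition pos_mx (star : B -> B) n (M : 'M[B]_n) : Prop :=
  exists s : seq 'M[B]_n, M = \sum_(A <- s) (mx_adj star A *m A).

Definition completely_positive (star : B -> B) (E : B -> B) : Prop :=
  forall n (M : 'M[B]_n), pos_mx star M -> pos_mx star (map_mx E M).

(* ---- the algebraic Fock space F_alg(B) ----
   A vector is a formal finite linear combination of simple tensors;
   the simple tensor u_1 (x) ... (x) u_n is the list [:: u_1; ...; u_n],
   and the empty list stands for Omega. *)
Definition vec := seq (C * seq B).
Definition op := seq B -> vec.

Definition Omega : vec := [:: (1, [::])].

Definition apply_op (A : op) (v : vec) : vec :=
  flatten [seq [seq (p.1 * q.1, q.2) | q <- A p.2] | p <- v].

Definition apply_ops (As : seq op) (v : vec) : vec := foldr apply_op v As.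

Definition form_simple (star : B -> B) (gamma : B -> B) (phi : B -> C)
  (u v : seq B) : C :=
  if size u != size v then 0 else
  match zip u v with
  | [::] => 1
  | (u1, v1) :: rest =>
      phi (foldl (fun g p => star p.2 * gamma_plus_phi gamma phi g * p.1)
                 (star v1 * u1) rest)
  end.

Definition form (star : B -> B) (gamma : B -> B) (phi : B -> C) (v w : vec) : C :=
  \sum_(p <- v) \sum_(q <- w) p.1 * (q.1)^* * form_simple star gamma phi p.2 q.2.

Definition acre (b : B) : op := fun s => [:: (1, b :: s)].

Definition aann (gamma : B -> B) (phi : B -> C) (b : B) : op := fun s =>
  match s with
  | [::] => [::]
  | [:: u1] => [:: (phi (b * u1), [::])]
  | u1 :: u2 :: s' => [:: (1, gamma_plus_phi gamma phi (b * u1) * u2 :: s')]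
  end.

Definition apres (L : B -> B -> B) (b : B) : op := fun s =>
  match s with
  | [::] => [::]
  | u1 :: s' => [:: (1, L b u1 :: s')]
  end.

Definition Xop (gamma : B -> B) (phi : B -> C) (L : B -> B -> B) (b : B) : op :=
  fun s => acre b s ++ aann gamma phi b s ++ apres L b s.

Definition vacuum_state (star : B -> B) (gamma : B -> B) (phi : B -> C)
  (As : seq op) : C :=
  form star gamma phi (apply_ops As Omega) Omega.

(* ---- set partitions of {0,...,n-1} (0-based version of {1,...,n}) ---- *)
Definition interval_partition n (P : {set {set 'I_n}}) : bool :=
  partition P [set: 'I_n] &&
  [forall V in P, [forall i : 'I_n, [forall j : 'I_n, [forall k : 'I_n,
     ((i \in V) && (k \in V) && (i <= j <= k)%N) ==> (j \in V)]]]].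

Definition boolean_cumulants (star : B -> B) (gamma : B -> B) (phi : B -> C)
  (Bc : seq op -> C) : Prop :=
  forall n (Y : 'I_n -> op), (0 < n)%N ->
    vacuum_state star gamma phi [seq Y i | i <- enum 'I_n] =
    \sum_(P : {set {set 'I_n}} | interval_partition P)
       \prod_(V in P) Bc [seq Y i | i <- enum V].

Definition ncns_tilde n (P : {set {set 'I_n}}) : bool :=
  [&& partition P [set: 'I_n],
      [forall a : 'I_n, [forall b : 'I_n, [forall c : 'I_n, [forall d : 'I_n,
         ((a < b < c)%N && (c < d)%N && (pblock P a == pblock P c)
           && (pblock P b == pblock P d)) ==> (pblock P a == pblock P b)]]]],
      [forall V in P, (1 < #|V|)%N] &
      [forall i : 'I_n, [forall j : 'I_n,
         ((i == 0%N :> nat) && (j == n.-1 :> nat)) ==> (pblock P i == pblock P j)]]].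

Definition WM_ops (gamma : B -> B) (phi : B -> C) (L : B -> B -> B) n
  (P : {set {set 'I_n}}) (u : 'I_n -> B) : seq op :=
  [seq (if [forall j in pblock P i, (i <= j)%N] then aann gamma phi (u i)
        else if [forall j in pblock P i, (j <= i)%N] then acre (u i)
        else apres L (u i)) | i <- enum 'I_n].

End FockDefs.

(* Expanding X(u_1)...X(u_n) Omega into the 3^n products of creation, annihilation
   and preservation operators, each product maps Omega to a multiple of a single simple
   tensor, and only the words whose tensor degree returns to 0 contribute to the vacuum
   moment m(u_1..u_n).  Cutting such a word at its first return to degree 0 gives
     m(u_1..u_n) = sum_k I(u_1..u_k) m(u_(k+1)..u_n),
   where I sums the words that do not return to degree 0 before the end.  Boolean cumulants
   are characterised by the same first-block recursion, so B_n = I by induction on n; in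
   particular B_1 = 0, as no word of length 1 has this property.  Finally these irreducible
   words of length n are exactly the words of the partitions of NC~_ns(n) (a^- at openings,
   a^0 at middle elements, a^+ at closings), and a partition is recovered from its word by
   matching steps of its Motzkin path that lie at the same level with no lower point in
   between. *)

From HB Require Import structures.
From mathcomp Require Import all_boot all_order all_algebra.
From mathcomp Require Import zify.
Import Order.TTheory GRing.Theory Num.Theory.
Set Implicit Arguments. Unset Strict Implicit. Unset Printing Implicit Defensive.

Inductive kind := Ann | Cre | Pres.

Definition nat_of_kind k := match k with Ann => 0 | Cre => 1 | Pres => 2 end.
Definition kind_of_nat n :=
  match n with 0 => Some Ann | 1 => Some Cre | 2 => Some Pres | _ => None end.
Lemma nat_of_kindK : pcancel nat_of_kind kind_of_nat. Proof. by case. Qed.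
HB.instance Definition _ := Equality.copy kind (pcan_type nat_of_kindK).

Fixpoint words n : seq (seq kind) :=
  if n is n'.+1 then [seq k :: w | k <- [:: Cre; Ann; Pres], w <- words n']
  else [:: [::]].

Lemma wordsS n : words n.+1 = [seq k :: w | k <- [:: Cre; Ann; Pres], w <- words n].
Proof. by []. Qed.
Arguments words : simpl never.

Lemma mem_words n w : (w \in words n) = (size w == n).
Proof.
elim: n w => [|n IH] [|k w]; rewrite ?wordsS //.
- by apply/allpairsP => -[[? ?] []].
- rewrite eqSS -IH; apply/allpairsP/idP => [[[k' w'] [/= _ ? [_ ->]]] // | ?].
  by exists (k, w); split => //; case: k.
Qed.

Lemma size_words n w : w \in words n -> size w = n.
Proof. by rewrite mem_words => /eqP. Qed.

Lemma uniq_words n : uniq (words n).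
Proof.
elim: n => // n IH; rewrite wordsS; apply: allpairs_uniq => // -[a b] [c d] _ _ /= [-> ->] //.
Qed.

Lemma big_words_cat (R : nmodType) m n (F : seq kind -> R) : m <= n ->
  (\sum_(w <- words n) F w =
   \sum_(x <- words m) \sum_(y <- words (n - m)) F (x ++ y))%R.
Proof.
elim: m n F => [|m IH] n F; first by rewrite big_seq1 subn0.
case: n => // n lemn.
rewrite wordsS subSS !big_allpairs_dep; apply: eq_bigr => k _.
exact: (IH n (fun w => F (k :: w))).
Qed.

Definition kind_step (k : kind) (o : option nat) : option nat :=
  if o is Some h then
    match k, h with
    | Cre, _ => Some h.+1
    | Ann, h'.+1 => Some h'
    | Pres, _.+1 => Some h
    | _, _ => None
    end
  else None.

(* The operators of a word act from right to left on Omega; [degree w] is the tensor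
   degree of the image of Omega, and [None] means that this image is 0. *)
Definition degree (w : seq kind) : option nat := foldr kind_step (Some 0) w.

Definition irreducible (w : seq kind) : bool :=
  [&& 0 < size w, degree w == Some 0 &
      all (fun j => degree (drop j w) != Some 0) (iota 1 (size w).-1)].

Definition first_return_at (k : nat) (w : seq kind) : bool :=
  irreducible (take k.+1 w) && (degree (drop k.+1 w) == Some 0).

Lemma foldr_kind_step_None w : foldr kind_step None w = None.
Proof. by elim: w => //= k w ->. Qed.

Lemma degree_cat x y : degree (x ++ y) = foldr kind_step (degree y) x.
Proof. by rewrite /degree foldr_cat. Qed.

Lemma degree_cat0 x y : degree y = Some 0 -> degree (x ++ y) = degree x.
Proof. by move=> dy; rewrite degree_cat dy. Qed.

Lemma degree_drop_Some w j : degree w = Some 0 -> exists h, degree (drop j w) = Some h.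
Proof.
case E: (degree (drop j w)) => [h|]; first by exists h.
by rewrite -(cat_take_drop j w) degree_cat E foldr_kind_step_None.
Qed.

Lemma drop_take_cat (T : Type) j m (s : seq T) : j <= m ->
  drop j s = drop j (take m s) ++ drop m s.
Proof.
elim: s j m => [|x s IH] [|j] [|m] //=; first by rewrite cat_take_drop.
by rewrite ltnS => /IH.
Qed.

Lemma degree_drop_take j m w : j <= m -> degree (drop m w) = Some 0 ->
  degree (drop j (take m w)) = degree (drop j w).
Proof. by move=> jm dm; rewrite (drop_take_cat w jm) degree_cat0. Qed.

Lemma first_return_unique w : degree w = Some 0 -> 0 < size w ->
  exists k0 : 'I_(size w), forall k : 'I_(size w), first_return_at k w = (k == k0).
Proof.
move=> dw sw.
have exP : exists j, (0 < j) && (degree (drop j w) == Some 0).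
  by exists (size w); rewrite sw drop_size eqxx.
case: (ex_minnP exP) => m /andP[m0 /eqP dm] mmin.
have mle : m <= size w by apply: mmin; rewrite sw drop_size eqxx.
have m1 : m.-1 < size w by rewrite prednK // (leq_trans _ mle).
have frm : first_return_at m.-1 w.
  have dtm : degree (take m w) = Some 0.
    by rewrite -[take m w]drop0 degree_drop_take ?drop0.
  rewrite /first_return_at prednK // dm eqxx andbT /irreducible size_takel // m0.
  rewrite dtm eqxx /=; apply/allP => j; rewrite mem_iota add1n prednK //.
  move=> /andP[j1 jm].
  rewrite (degree_drop_take (ltnW jm) dm); apply: contraTN jm => /eqP dj.
  by rewrite -leqNgt mmin // j1 dj eqxx.
exists (Ordinal m1) => k; apply/idP/eqP => [/andP[/and3P[_ _ /allP irr] /eqP dk]|->//].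
have mk : m <= k.+1 by apply: mmin; rewrite dk eqxx.
apply: val_inj => /=; case: (ltngtP m k.+1) mk => [lt _||->] //.
have := irr m; rewrite mem_iota size_takel // m0 add1n /= lt => /(_ isT).
by rewrite (degree_drop_take (ltnW lt) dk) dm.
Qed.

Definition height (w : seq kind) (m : nat) : nat := odflt 0 (degree (drop m w)).

(* Read from left to right, [height w] is a Motzkin path in which an annihilator
   (opening of a block) is an up step and a creator (closing of a block) a down step. *)
Definition step_spec (k : kind) (x y : nat) : Prop :=
  match k with Cre => x = y.+1 | Ann => y = x.+1 | Pres => x = y /\ 0 < x end.

Lemma height_size w : height w (size w) = 0. Proof. by rewrite /height drop_size. Qed.

Section Height.
Variable w : seq kind.
Hypothesis dw : degree w = Some 0.

Lemma height0 : height w 0 = 0. Proof. by rewrite /height drop0 dw. Qed.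

Lemma height_steps j : j < size w -> step_spec (nth Ann w j) (height w j) (height w j.+1).
Proof.
move=> jn; rewrite /height.
have [a Ea] := degree_drop_Some j dw; have [b Eb] := degree_drop_Some j.+1 dw.
move: Ea; rewrite (drop_nth Ann jn) /degree /= -/(degree _) Eb /= => Ea.
by case: (nth Ann w j) Ea; case: b Eb => //= b _ [<-].
Qed.

Lemma height_pos m : irreducible w -> 0 < m < size w -> 0 < height w m.
Proof.
move=> /and3P[_ _ /allP irr] mn; have [a Ea] := degree_drop_Some m dw.
have := irr m; rewrite mem_iota /height Ea /=; case: a Ea => // _.
by rewrite eqxx /=; lia.
Qed.
End Height.

Section WordExpansion.
Variables (C : numClosedFieldType) (B : algType C).
Variables (star : B -> B) (gamma : B -> B) (phi : B -> C) (L : B -> B -> B).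
Local Open Scope ring_scope.

Definition op_of_kind (k : kind) (u : B) : op B :=
  match k with Ann => aann gamma phi u | Cre => acre u | Pres => apres L u end.

Fixpoint word_ops (w : seq kind) (us : seq B) : seq (op B) :=
  if (w, us) is (k :: w', u :: us') then op_of_kind k u :: word_ops w' us' else [::].

Definition linext (g : seq B -> C) (v : vec B) : C := \sum_(p <- v) p.1 * g p.2.

Lemma linext_cat g v1 v2 : linext g (v1 ++ v2) = linext g v1 + linext g v2.
Proof. exact: big_cat. Qed.

Lemma linext_seq1 g c s : linext g [:: (c, s)] = c * g s.
Proof. exact: big_seq1. Qed.

Lemma eq_linext g1 g2 v : g1 =1 g2 -> linext g1 v = linext g2 v.
Proof. by move=> e; apply: eq_bigr => p _; rewrite e. Qed.

Lemma linext_sum (T : Type) (r : seq T) (G : T -> seq B -> C) v :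
  linext (fun s => \sum_(x <- r) G x s) v = \sum_(x <- r) linext (G x) v.
Proof. by rewrite /linext exchange_big; apply: eq_bigr => p _; rewrite mulr_sumr. Qed.

Lemma linext_apply_op g (A : op B) v :
  linext g (apply_op A v) = linext (fun s => linext g (A s)) v.
Proof.
elim: v => [|p v IH]; first by rewrite /linext !big_nil.
rewrite /apply_op /= linext_cat -/(apply_op A v) IH /linext big_cons big_map.
by congr (_ + _); rewrite mulr_sumr; apply: eq_bigr => q _; rewrite mulrA.
Qed.

Lemma linext_apply_ops g (As : seq (op B)) v :
  linext g (apply_ops As v) = linext (fun s => linext g (apply_ops As [:: (1, s)])) v.
Proof.
elim: As g => [|A As IH] g /=; first by apply: eq_linext => s; rewrite linext_seq1 mul1r.
by rewrite linext_apply_op IH; apply: eq_linext => s; rewrite -linext_apply_op.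
Qed.

Lemma linext_apply_Xops g (us : seq B) v :
  linext g (apply_ops (map (Xop gamma phi L) us) v) =
  \sum_(w <- words (size us)) linext g (apply_ops (word_ops w us) v).
Proof.
elim: us g => [|u us IH] g /=; first by rewrite big_seq1.
have Xop_kinds s : linext g (Xop gamma phi L u s) =
    \sum_(k <- [:: Cre; Ann; Pres]) linext g (op_of_kind k u s).
  by rewrite /Xop !linext_cat !big_cons big_nil addr0.
rewrite linext_apply_op (eq_linext _ Xop_kinds) IH wordsS big_allpairs_dep exchange_big.
apply: eq_bigr => w _; rewrite linext_sum; apply: eq_bigr => k _.
by rewrite linext_apply_op.
Qed.

Definition vacuum_coef (s : seq B) : C := form_simple star gamma phi s [::].

Lemma vacuum_state_linext As :
  vacuum_state star gamma phi As = linext vacuum_coef (apply_ops As (Omega B)).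
Proof. by apply: eq_bigr => p _; rewrite big_seq1 /= conjC1 mulr1. Qed.

Lemma vacuum_state_nil : vacuum_state star gamma phi [::] = 1.
Proof. by rewrite vacuum_state_linext linext_seq1 mul1r. Qed.

Definition word_value (w : seq kind) (us : seq B) : C :=
  vacuum_state star gamma phi (word_ops w us).

Definition moment (us : seq B) : C :=
  vacuum_state star gamma phi (map (Xop gamma phi L) us).

Lemma moment_words us : moment us = \sum_(w <- words (size us)) word_value w us.
Proof.
rewrite /moment vacuum_state_linext linext_apply_Xops.
by apply: eq_bigr => w _; rewrite /word_value vacuum_state_linext.
Qed.

Lemma apply_word_ops_shape w us : size w = size us ->
  match degree w with
  | None => apply_ops (word_ops w us) (Omega B) = [::]
  | Some h => exists c s, apply_ops (word_ops w us) (Omega B) = [:: (c, s)] /\ size s = h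
  end.
Proof.
elim: w us => [|k w IH] [|u us] //= => [_|[/IH]]; first by exists 1, [::].
rewrite /degree /= -/(degree w).
case: (degree w) => [h|] /=; last by move=> ->.
move=> [c [s [-> <-]]]; case: k => /=.
- case: s => [|u1 [|u2 s]] //=; first by exists (c * phi (u * u1)), [::].
  by exists (c * 1), (gamma_plus_phi gamma phi (u * u1) * u2 :: s).
- by exists (c * 1), (u :: s).
- by case: s => [|u1 s] //=; exists (c * 1), (L u u1 :: s).
Qed.

Lemma word_value_eq0 w us : size w = size us -> degree w != Some 0 -> word_value w us = 0.
Proof.
move=> /apply_word_ops_shape; rewrite /word_value vacuum_state_linext.
case: (degree w) => [h [c [[|x s] [-> <-]]] //|-> _]; last exact: big_nil.
by rewrite linext_seq1 mulr0.
Qed.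

Lemma apply_word_ops_degree0 w us : size w = size us -> degree w = Some 0 ->
  apply_ops (word_ops w us) (Omega B) = [:: (word_value w us, [::])].
Proof.
move=> /apply_word_ops_shape + dw; rewrite dw /word_value vacuum_state_linext.
by move=> [c [[|x s] [-> _]]] //; rewrite linext_seq1 mulr1.
Qed.

Lemma word_ops_cat w1 w2 us1 us2 : size w1 = size us1 ->
  word_ops (w1 ++ w2) (us1 ++ us2) = word_ops w1 us1 ++ word_ops w2 us2.
Proof. by elim: w1 us1 => [|k w1 IH] [|u us1] //= => -[/IH ->]. Qed.

Lemma word_value_cat w1 w2 us1 us2 : size w1 = size us1 -> size w2 = size us2 ->
  degree w2 = Some 0 ->
  word_value (w1 ++ w2) (us1 ++ us2) = word_value w1 us1 * word_value w2 us2.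
Proof.
move=> s1 s2 d2; rewrite {1}/word_value vacuum_state_linext word_ops_cat //.
rewrite /apply_ops foldr_cat -!/(apply_ops _ _) apply_word_ops_degree0 //.
by rewrite linext_apply_ops linext_seq1 mulrC /word_value !vacuum_state_linext.
Qed.

Definition irreducible_part (us : seq B) : C :=
  \sum_(w <- words (size us) | irreducible w) word_value w us.

Lemma word_value_first_return w us : size w = size us -> (0 < size us)%N ->
  word_value w us = \sum_(k < size us) (first_return_at k w)%:R * word_value w us.
Proof.
move=> sw n0; case: (eqVneq (degree w) (Some 0%N)) => [dw|dw]; last first.
  by rewrite word_value_eq0 // big1 // => k _; rewrite mulr0.
rewrite -sw in n0 *; have [k0 frk0] := first_return_unique dw n0.
rewrite (eq_bigr (fun k => if k == k0 then word_value w us else 0)) => [|k _].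
  by rewrite -big_mkcond big_pred1_eq.
by rewrite frk0; case: eqP; rewrite ?mul1r ?mul0r.
Qed.

Lemma first_return_word_value k x y us : (k < size us)%N ->
  size x = k.+1 -> size y = (size us - k.+1)%N ->
  (first_return_at k (x ++ y))%:R * word_value (x ++ y) us =
  (irreducible x)%:R * (word_value x (take k.+1 us) * word_value y (drop k.+1 us)).
Proof.
move=> kn sx sy; rewrite /first_return_at take_size_cat // drop_size_cat //.
have sd : size (drop k.+1 us) = size y by rewrite size_drop.
case: (eqVneq (degree y) (Some 0%N)) => [dy|dy]; last first.
  by rewrite andbF mul0r (word_value_eq0 (w := y)) ?mulr0.
have st : size (take k.+1 us) = size x by rewrite size_takel.
by rewrite andbT -{1}(cat_take_drop k.+1 us) word_value_cat.
Qed.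

Lemma moment_first_return us : (0 < size us)%N ->
  moment us = \sum_(k < size us) irreducible_part (take k.+1 us) * moment (drop k.+1 us).
Proof.
move=> n0; rewrite moment_words.
rewrite (eq_big_seq _ (fun w ww => word_value_first_return (size_words ww) n0)).
rewrite exchange_big; apply: eq_bigr => k _ /=.
rewrite (big_words_cat _ (ltn_ord k)) /irreducible_part moment_words size_takel //.
rewrite size_drop big_distrl [RHS]big_mkcond /=; apply: eq_big_seq => x /size_words sx.
rewrite (eq_big_seq _ (fun y yw => first_return_word_value (ltn_ord k) sx (size_words yw))).
by rewrite -mulr_sumr; case: irreducible; rewrite ?mul1r ?mul0r // -mulr_sumr.
Qed.

End WordExpansion.

Section IntervalPartitions.
Variable n : nat.

Definition tail_set (a : nat) : {set 'I_n} := [set i : 'I_n | a <= i].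
Definition interval_set (a k : nat) : {set 'I_n} := [set i : 'I_n | a <= i <= k].

Definition convex_blocks (P : {set {set 'I_n}}) : bool :=
  [forall V in P, [forall i : 'I_n, [forall j : 'I_n, [forall k : 'I_n,
     ((i \in V) && (k \in V) && (i <= j <= k)) ==> (j \in V)]]]].

Definition interval_partition_from (a : nat) (P : {set {set 'I_n}}) : bool :=
  partition P (tail_set a) && convex_blocks P.

Lemma interval_partition_from0 P : interval_partition P = interval_partition_from 0 P.
Proof. by rewrite /interval_partition /interval_partition_from; congr (partition _ _ && _). Qed.

Lemma interval_partition_from_n P : interval_partition_from n P = (P == set0).
Proof.
have e : tail_set n = set0 by apply/setP => i; rewrite !inE leqNgt ltn_ord.
rewrite /interval_partition_from e partition_set0; case: eqP => //= ->.
by apply/forall_inP => V; rewrite inE.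
Qed.

Lemma convex_blocksP (P : {set {set 'I_n}}) : reflect
  (forall V, V \in P -> forall i j k : 'I_n, i \in V -> k \in V -> i <= j <= k -> j \in V)
  (convex_blocks P).
Proof.
apply: (iffP forall_inP) => [H V PV i j k iV kV ijk | H V PV].
  by move: (H V PV) => /forallP/(_ i)/forallP/(_ j)/forallP/(_ k)/implyP; apply; rewrite iV kV.
apply/forallP => i; apply/forallP => j; apply/forallP => k; apply/implyP.
by move=> /andP[/andP[iV kV] ijk]; exact: (H V PV i j k).
Qed.

Lemma convex_blocksS (P Q : {set {set 'I_n}}) :
  P \subset Q -> convex_blocks Q -> convex_blocks P.
Proof. by move=> /subsetP PQ /convex_blocksP cvx; apply/convex_blocksP => V /PQ; apply: cvx. Qed.

Section FirstBlock.
Variables (a : nat) (an : a < n).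
Let a0 : 'I_n := Ordinal an.

Lemma mem_interval_set_first k : a <= k -> a0 \in interval_set a k.
Proof. by move=> ak; rewrite inE /= leqnn ak. Qed.

Lemma interval_set_inj k k' : a <= k < n -> a <= k' < n ->
  interval_set a k = interval_set a k' -> k = k'.
Proof.
move=> /andP[ak kn] /andP[ak' kn'] e; apply/eqP; rewrite eqn_leq.
have := congr1 (fun S : {set 'I_n} => Ordinal kn \in S) e; rewrite !inE /= ak leqnn /= => <-.
by have := congr1 (fun S : {set 'I_n} => Ordinal kn' \in S) e; rewrite !inE /= ak' leqnn /= => ->.
Qed.

Definition first_block_end (P : {set {set 'I_n}}) : 'I_n :=
  [arg max_(j > a0 in pblock P a0) (j : nat)].

Lemma first_block_endP P : interval_partition_from a P ->
  a <= first_block_end P /\ pblock P a0 = interval_set a (first_block_end P).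
Proof.
move=> /andP[/and3P[/eqP cP _ _] /convex_blocksP cvxP].
have a0P : a0 \in cover P by rewrite cP inE.
have a0V : a0 \in pblock P a0 by rewrite mem_pblock.
rewrite /first_block_end; case: arg_maxnP => // m mV mmax.
have gea x : x \in pblock P a0 -> a <= x.
  move=> xV; have : x \in cover P by apply/bigcupP; exists (pblock P a0); rewrite ?pblock_mem.
  by rewrite cP inE.
split; first exact: gea.
apply/setP => x; rewrite inE; apply/idP/andP => [xV|[ax xm]].
  by split; [exact: gea | exact: mmax].
by apply: (cvxP _ (pblock_mem a0P) a0 x m); rewrite //= ax.
Qed.

Lemma tail_setD k : a <= k -> tail_set a :\: interval_set a k = tail_set k.+1.
Proof. by move=> ak; apply/setP => i; rewrite !inE; lia. Qed.

Lemma interval_partition_from_D1 k (P : {set {set 'I_n}}) :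
  a <= k -> interval_partition_from a P ->
  interval_set a k \in P -> interval_partition_from k.+1 (P :\ interval_set a k).
Proof.
move=> ak /andP[partP cvxP] BP; rewrite /interval_partition_from -tail_setD //.
by rewrite partitionD1 //; apply: convex_blocksS cvxP; apply: subsetDl.
Qed.

Lemma interval_partition_from_U1 k (P : {set {set 'I_n}}) :
  a <= k < n -> interval_partition_from k.+1 P ->
  interval_partition_from a (interval_set a k |: P) && (interval_set a k \notin P).
Proof.
move=> /andP[ak kn] /andP[partP /convex_blocksP cvxP].
have Bk0 : interval_set a k != set0 by apply/set0Pn; exists a0; rewrite mem_interval_set_first.
have disj : [disjoint interval_set a k & tail_set k.+1].
  by rewrite -setI_eq0; apply/eqP/setP => i; rewrite !inE; lia.
have tailU : tail_set a = interval_set a k :|: tail_set k.+1.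
  by apply/setP => i; rewrite !inE; lia.
rewrite /interval_partition_from tailU partitionU1 //=; apply/andP; split.
  apply/convex_blocksP => V /setU1P[-> i j l|]; last exact: cvxP.
  by rewrite !inE; lia.
apply: contraTN disj => BP; rewrite -setI_eq0 -(cover_partition partP) setIC.
apply/set0Pn; exists a0; rewrite inE mem_interval_set_first // andbT.
by apply/bigcupP; exists (interval_set a k); rewrite ?mem_interval_set_first.
Qed.

Lemma sum_interval_partition_from (R : comPzSemiRingType) (F : {set 'I_n} -> R) :
  (\sum_(P | interval_partition_from a P) \prod_(V in P) F V =
   \sum_(k < n | (a <= k)%N) F (interval_set a k) *
     \sum_(P | interval_partition_from k.+1 P) \prod_(V in P) F V)%R.
Proof.
rewrite (partition_big first_block_end (fun k : 'I_n => a <= k)) => [|P /first_block_endP[]//].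
apply: eq_bigr => k ak; set Bk := interval_set a k.
have akn : a <= k < n by rewrite ak ltn_ord.
transitivity (\sum_(P | interval_partition_from a P && (pblock P a0 == Bk)) \prod_(V in P) F V)%R.
  apply: eq_bigl => P; apply: andb_id2l => /first_block_endP[ae ->].
  apply/eqP/eqP => [-> // | /interval_set_inj e]; apply: val_inj; apply: e => //.
  by rewrite ae ltn_ord.
rewrite (reindex_onto (fun P => Bk |: P) (fun P => P :\ Bk)) => [|P /andP[IP /eqP <-]]; last first.
  by rewrite setD1K // pblock_mem // (cover_partition (proj1 (andP IP))) inE.
have filterE P : [&& interval_partition_from a (Bk |: P), pblock (Bk |: P) a0 == Bk
    & (Bk |: P) :\ Bk == P] = interval_partition_from k.+1 P.
  apply/idP/idP => [/and3P[IP _ /eqP <-]|IP].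
    by apply: interval_partition_from_D1 => //; apply: setU11.
  have /andP[IP' BP] := interval_partition_from_U1 akn IP.
  rewrite IP' setU1K // eqxx andbT /=; apply/eqP/def_pblock; rewrite ?setU11 //.
    by case/andP: IP' => /and3P[].
  exact: mem_interval_set_first.
rewrite mulr_sumr; apply: eq_big => P; first by rewrite -andbA filterE.
move=> /andP[_ /eqP Pe]; rewrite big_setU1 //=.
by rewrite -Pe !inE eqxx.
Qed.

End FirstBlock.
End IntervalPartitions.

Lemma enum_interval_set n a k : a <= k < n ->
  map val (enum (interval_set n a k)) = iota a (k.+1 - a).
Proof.
move=> /andP[ak kn]; rewrite /enum_mem -enumT.
rewrite (eq_filter (a2 := preim val (fun i => a <= i <= k))) => [|i]; last by rewrite /= inE.
rewrite -filter_map val_enum_ord -(subnKC (leq_trans ak (ltnW kn))) iotaD filter_cat.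
rewrite (eq_in_filter (a2 := pred0)) => [|i]; last by rewrite mem_iota /=; lia.
rewrite filter_pred0 add0n (eq_in_filter (a2 := fun i => i <= a + (k - a))) => [|i]; last first.
  by rewrite mem_iota => /andP[-> _]; rewrite subnKC.
by rewrite filter_iota_leq ?subSn // ltn_sub2r // (leq_ltn_trans ak kn).
Qed.

Section BooleanRecursion.
Variables (C : numClosedFieldType) (B : algType C).
Variables (star : B -> B) (gamma : B -> B) (phi : B -> C).
Variable Bc : seq (op B) -> C.
Hypothesis HBc : boolean_cumulants star gamma phi Bc.
Local Open Scope ring_scope.

Definition zero_op : op B := fun _ => [::].

Definition interval_expansion (t : seq (op B)) (b : nat) : C :=
  \sum_(P : {set {set 'I_(size t)}} | interval_partition_from b P)
     \prod_(V in P) Bc [seq nth zero_op t i | i : 'I_(size t) <- enum V].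

Lemma interval_expansion_rec t b : (b < size t)%N -> interval_expansion t b =
  \sum_(b <= k < size t) Bc (take (k.+1 - b) (drop b t)) * interval_expansion t k.+1.
Proof.
move=> bn; rewrite /interval_expansion (sum_interval_partition_from bn) big_geq_mkord.
apply: eq_big => // k bk; congr (Bc _ * _).
rewrite (map_comp (nth zero_op t) val) enum_interval_set ?bk ?ltn_ord //.
by rewrite map_nth_iota // leq_sub2r.
Qed.

Lemma interval_expansion_size t : interval_expansion t (size t) = 1.
Proof.
rewrite /interval_expansion (eq_bigl (pred1 set0)) => [|P]; last first.
  exact: interval_partition_from_n.
by rewrite big_pred1_eq big_set0.
Qed.

Lemma interval_expansion_drop t b : (b <= size t)%N ->
  interval_expansion t b = interval_expansion (drop b t) 0.
Proof.
move: {2}(size t - b)%N (leqnn (size t - b)) => N; elim: N t b => [|N IH] t b hN hb.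
  have -> : b = size t by apply/eqP; rewrite eqn_leq hb -subn_eq0 -leqn0.
  by rewrite drop_size !interval_expansion_size.
case: (ltngtP b (size t)) hb => [bn _|//|->]; last first.
  by rewrite drop_size !interval_expansion_size.
have sd : size (drop b t) = (size t - b)%N by rewrite size_drop.
rewrite interval_expansion_rec // interval_expansion_rec ?sd ?subn_gt0 //.
rewrite (big_addn 0 _ b); apply: eq_big_nat => j /andP[_ jn].
rewrite subn0 drop0 -addSn addnK (IH t (j + b).+1); [|lia|lia].
by rewrite (IH (drop b t) j.+1) ?sd; [rewrite !drop_drop addSn|lia|lia].
Qed.

Lemma vacuum_state_interval_expansion t :
  vacuum_state star gamma phi t = interval_expansion t 0.
Proof.
case: (posnP (size t)) => [/size0nil-> | tp].
  by rewrite vacuum_state_nil (interval_expansion_size [::]).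
have := HBc (fun i : 'I_(size t) => nth zero_op t i) tp.
rewrite (map_comp (nth zero_op t) val) val_enum_ord map_nth_iota0 // take_size => ->.
by apply: eq_bigl => P; apply: interval_partition_from0.
Qed.

Lemma vacuum_state_first_block t : (0 < size t)%N -> vacuum_state star gamma phi t =
  \sum_(k < size t) Bc (take k.+1 t) * vacuum_state star gamma phi (drop k.+1 t).
Proof.
move=> tp; rewrite vacuum_state_interval_expansion interval_expansion_rec // big_mkord.
apply: eq_bigr => k _.
by rewrite subn0 drop0 vacuum_state_interval_expansion interval_expansion_drop.
Qed.

End BooleanRecursion.

Section Matching.
Variable d : nat -> nat.

Definition level (i : nat) : nat := maxn (d i) (d i.+1).

Definition matched (i j : nat) : bool :=
  (level i == level j) &&
  all (fun m => level i <= d m) (index_iota (minn i j).+1 (maxn i j).+1).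

Lemma matchedP i j : reflect
  (level i = level j /\ forall m, minn i j < m <= maxn i j -> level i <= d m)
  (matched i j).
Proof.
apply: (iffP andP) => [[/eqP e /allP h]|[/eqP e h]]; split => //.
  by move=> m hm; apply: h; rewrite mem_index_iota ltnS.
by apply/allP => m; rewrite mem_index_iota ltnS; apply: h.
Qed.

Lemma matched_refl i : matched i i.
Proof. by apply/matchedP; split => // m; lia. Qed.

Lemma matched_sym i j : matched i j = matched j i.
Proof.
by apply/matchedP/matchedP => -[e h]; split => [|m hm]; rewrite // -e; apply: h; lia.
Qed.

Lemma matched_trans i j k : matched i j -> matched j k -> matched i k.
Proof.
move=> /matchedP[e1 h1] /matchedP[e2 h2]; apply/matchedP; split=> [|m hm]; first by rewrite e1.
have [|] : (minn i j < m <= maxn i j) \/ (minn j k < m <= maxn j k) by lia.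
  exact: h1.
by rewrite e1; apply: h2.
Qed.

Lemma matched_noncrossing a b c e : a < b < c -> c < e ->
  matched a c -> matched b e -> matched a b.
Proof.
move=> /andP[ab bc] ce /matchedP[e1 h1] /matchedP[e2 h2].
have lb : level a <= level b by rewrite leq_max h1 //; lia.
have lc : level b <= level c by rewrite leq_max h2 //; lia.
apply/matchedP; split=> [|m hm]; first by apply/eqP; rewrite eqn_leq lb e1 lc.
by apply: h1; lia.
Qed.

End Matching.

Section MotzkinPath.
Variables (n : nat) (w : seq kind) (d : nat -> nat).
Hypotheses (d0 : d 0 = 0) (dn : d n = 0)
  (d_steps : forall j, j < n -> step_spec (nth Ann w j) (d j) (d j.+1)).

Lemma right_match i : i < n -> nth Ann w i != Cre -> exists2 j, i < j < n & matched d i j.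
Proof.
move=> iN wi.
have [lvl_i pos] : level d i = d i.+1 /\ 0 < d i.+1.
  by move: (d_steps iN); rewrite /level; case: (nth Ann w i) wi => //= _; lia.
have exP : exists m, (i < m) && (d m < d i.+1) by exists n; rewrite iN dn pos.
case: (ex_minnP exP) => m /andP[im dm] mmin.
have above m' : i < m' < m -> d i.+1 <= d m'.
  move=> /andP[h1 h2]; rewrite leqNgt; apply/negP => h.
  by have := mmin m'; rewrite h1 h => /(_ isT); rewrite leqNgt h2.
have mn : m <= n by apply: mmin; rewrite iN dn pos.
have im1 : i.+1 < m by rewrite ltn_neqAle im andbT; apply: contraTneq dm => <-; rewrite ltnn.
have dm1 : d i.+1 <= d m.-1 by apply: above; lia.
have m1n : m.-1 < n by lia.
move: (d_steps m1n); rewrite prednK; last lia.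
case: (nth Ann w m.-1) => /= [e|e|[e _]]; try lia.
exists m.-1; first lia.
apply/matchedP; rewrite lvl_i /level prednK; last lia.
by split=> [|m' hm']; [lia | apply: above; lia].
Qed.

Lemma left_match i : i < n -> nth Ann w i != Ann -> exists2 j, j < i & matched d j i.
Proof.
move=> iN wi.
have [lvl_i pos] : level d i = d i /\ 0 < d i.
  by move: (d_steps iN); rewrite /level; case: (nth Ann w i) wi => //= _; lia.
have exP : exists m, (m <= i) && (d m < d i) by exists 0; rewrite d0 pos.
have ub m : (m <= i) && (d m < d i) -> m <= i by case/andP.
case: (ex_maxnP exP ub) => m /andP[mi dm] mmax.
have above m' : m < m' <= i -> d i <= d m'.
  move=> /andP[h1 h2]; rewrite leqNgt; apply/negP => h.
  by have := mmax m'; rewrite h2 h => /(_ isT); rewrite leqNgt h1.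
have mi' : m < i by rewrite ltn_neqAle mi andbT; apply: contraTneq dm => ->; rewrite ltnn.
have dm1 : d i <= d m.+1 by apply: above; lia.
move: (d_steps (ltn_trans mi' iN)).
case: (nth Ann w m) => /= [e|e|[e _]]; try lia.
exists m => //; apply/matchedP; rewrite lvl_i /level.
by split=> [|m' hm']; [lia | have := above m'; lia].
Qed.

Lemma Ann_no_left_match i j : i < n -> nth Ann w i = Ann -> j < i -> ~~ matched d j i.
Proof.
move=> iN wi ji; apply/matchedP => -[e h]; move: (d_steps iN); rewrite wi /=.
by have := h i; rewrite /level in e h *; lia.
Qed.

Lemma Cre_no_right_match i j : i < n -> nth Ann w i = Cre -> i < j -> ~~ matched d i j.
Proof.
move=> iN wi ij; apply/matchedP => -[e h]; move: (d_steps iN); rewrite wi /=.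
by have := h i.+1; rewrite /level in e h *; lia.
Qed.

End MotzkinPath.

Section PartitionWord.
Variable n : nat.
Implicit Type P : {set {set 'I_n}}.

Definition block_kind P (i : 'I_n) : kind :=
  if [forall j in pblock P i, i <= j] then Ann
  else if [forall j in pblock P i, j <= i] then Cre else Pres.

Definition partition_word P : seq kind := [seq block_kind P i | i <- enum 'I_n].

Lemma size_partition_word P : size (partition_word P) = n.
Proof. by rewrite size_map size_enum_ord. Qed.

Lemma nth_partition_word P (i : 'I_n) : nth Ann (partition_word P) i = block_kind P i.
Proof. by rewrite (nth_map i) ?size_enum_ord // nth_ord_enum. Qed.

Section MatchingPartition.
Variables (w : seq kind) (d : nat -> nat).
Hypotheses (size_w : size w = n) (d0 : d 0 = 0) (dn : d n = 0)
  (d_steps : forall j, j < n -> step_spec (nth Ann w j) (d j) (d j.+1))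
  (d_pos : forall m, 0 < m < n -> 0 < d m).

Definition matching_partition :=
  equivalence_partition (fun i j : 'I_n => matched d i j) [set: 'I_n].

Lemma matched_equiv : {in [set: 'I_n] & &, equivalence_rel (fun i j : 'I_n => matched d i j)}.
Proof.
move=> x y z _ _ _; split=> [|xy]; first exact: matched_refl.
by apply/idP/idP => [|yz]; [apply: matched_trans; rewrite matched_sym | apply: matched_trans yz].
Qed.

Lemma matching_partitionP : partition matching_partition [set: 'I_n].
Proof. exact: equivalence_partitionP matched_equiv. Qed.

Lemma mem_pblock_matching x y : (y \in pblock matching_partition x) = matched d x y.
Proof. by rewrite (pblock_equivalence_partition matched_equiv) ?inE. Qed.

Lemma eq_pblock_matching x y :
  (pblock matching_partition x == pblock matching_partition y) = matched d x y.
Proof.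
have /and3P[/eqP cP tP _] := matching_partitionP.
by rewrite eq_pblock // ?mem_pblock_matching // cP inE.
Qed.

Lemma exists_match (i : 'I_n) : exists2 j : 'I_n, j != i & matched d i j.
Proof.
case: (eqVneq (nth Ann w i) Cre) => wi.
  have [j ji mji] : exists2 j, j < i & matched d j i.
    by apply: (@left_match n w d) => //; rewrite wi.
  exists (Ordinal (ltn_trans ji (ltn_ord i))); last by rewrite matched_sym.
  by rewrite -val_eqE /= ltn_eqF.
have [j /andP[ij jn] mij] : exists2 j, i < j < n & matched d i j.
  by apply: (@right_match n w d).
by exists (Ordinal jn); rewrite // -val_eqE /= gtn_eqF.
Qed.

Lemma matched_ends : matched d 0 n.-1.
Proof.
case: (ltnP 1 n) => n2; last by rewrite (_ : n.-1 = 0) ?matched_refl //; lia.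
have d1 : d 1 = 1 by have := d_steps (ltnW n2); rewrite d0; case: (nth Ann w 0) => /=; lia.
have dn1 : d n.-1 = 1.
  have := d_steps (_ : n.-1 < n); rewrite prednK ?dn; last lia.
  by case: (nth Ann w n.-1) => /=; lia.
apply/matchedP; rewrite /level d0 d1 dn1 prednK ?dn; last lia.
by split=> // m hm; apply: d_pos; lia.
Qed.

Lemma matching_partition_ncns : ncns_tilde matching_partition.
Proof.
have /and3P[/eqP cP tP nP] := matching_partitionP.
apply/and4P; split; first exact: matching_partitionP.
- apply/forallP => a; apply/forallP => b; apply/forallP => c; apply/forallP => e.
  apply/implyP => /andP[/andP[/andP[abc ce]]]; rewrite !eq_pblock_matching.
  exact: matched_noncrossing.
- apply/forall_inP => V VP; have /set0Pn[x xV] : V != set0 by apply: contraNneq nP => <-.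
  have [j jx mxj] := exists_match x.
  apply/card_gt1P; exists x, j; split=> //; last by rewrite eq_sym.
  by rewrite -(def_pblock tP VP xV) mem_pblock_matching.
- apply/forallP => i; apply/forallP => j; apply/implyP => /andP[/eqP i0 /eqP jn].
  by rewrite eq_pblock_matching i0 jn matched_ends.
Qed.

Lemma partition_word_matching : partition_word matching_partition = w.
Proof.
apply: (@eq_from_nth _ Ann); first by rewrite size_partition_word size_w.
move=> i; rewrite size_partition_word => iN.
rewrite -[i]/(nat_of_ord (Ordinal iN)) nth_partition_word /block_kind; set x := Ordinal iN.
have left_in (j : nat) :
    j < x -> matched d j x -> ~~ [forall j in pblock matching_partition x, x <= j].
  move=> jx mjx; have jn := ltn_trans jx iN; apply/forall_inPn; exists (Ordinal jn) => /=.
    by rewrite mem_pblock_matching matched_sym.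
  by rewrite -ltnNge.
case wx: (nth Ann w x).
- rewrite ifT //; apply/forall_inP => j; rewrite mem_pblock_matching leqNgt => mxj.
  by apply: contraL mxj => jx; rewrite matched_sym (@Ann_no_left_match n w d).
- have [j jx mjx] : exists2 j, j < x & matched d j x.
    by apply: (@left_match n w d) => //; rewrite wx.
  rewrite (ifN _ _ (left_in j jx mjx)) ifT //.
  apply/forall_inP => k; rewrite mem_pblock_matching leqNgt.
  by apply: contraL => xk; rewrite (@Cre_no_right_match n w d).
- have [j jx mjx] : exists2 j, j < x & matched d j x.
    by apply: (@left_match n w d) => //; rewrite wx.
  have [k /andP[xk kn] mxk] : exists2 k, x < k < n & matched d x k.
    by apply: (@right_match n w d) => //; rewrite wx.
  rewrite (ifN _ _ (left_in j jx mjx)) ifN //; apply/forall_inPn; exists (Ordinal kn).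
    by rewrite mem_pblock_matching.
  by rewrite /= -ltnNge.
Qed.

End MatchingPartition.
End PartitionWord.

Section NoncrossingPartition.
Variables (n : nat) (P : {set {set 'I_n}}).
Hypothesis P_ncns : ncns_tilde P.

Lemma ncns_partition : partition P [set: 'I_n].
Proof. by case/and4P: P_ncns. Qed.

Lemma pblock_ncns x : pblock P x \in P.
Proof. by rewrite pblock_mem // (cover_partition ncns_partition) inE. Qed.

Lemma mem_pblock_ncns x : x \in pblock P x.
Proof. by rewrite mem_pblock (cover_partition ncns_partition) inE. Qed.

Lemma pblock_ncns_of W x : W \in P -> x \in W -> pblock P x = W.
Proof. exact/def_pblock/partition_trivIset/ncns_partition. Qed.

Lemma notin_other_block W x : W \in P -> W != pblock P x -> x \notin W.
Proof. by move=> WP; apply: contra => xW; rewrite (pblock_ncns_of WP xW). Qed.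

Lemma ncns_noncrossing (a b c e : 'I_n) : a < b < c -> c < e ->
  pblock P a = pblock P c -> pblock P b = pblock P e -> pblock P a = pblock P b.
Proof.
case/and4P: P_ncns => _ /forallP nc _ _ abc ce ac be.
move: (nc a) => /forallP/(_ b)/forallP/(_ c)/forallP/(_ e)/implyP.
by rewrite abc ce ac be !eqxx => /(_ isT)/eqP.
Qed.

Lemma ncns_nested (x y i j : 'I_n) : pblock P x = pblock P y -> pblock P i = pblock P j ->
  pblock P x != pblock P i -> x < i < y -> x < j < y.
Proof.
move=> xy ij xi /andP[lt_xi lt_iy].
have same : pblock P x = pblock P i -> False by move=> e; move: xi; rewrite e eqxx.
case: (ltngtP j y) => [_|yj|/val_inj jy]; last by case: same; rewrite xy ij jy.
  rewrite andbT; case: (ltngtP x j) => [//|jx|/val_inj xj]; last by case: same; rewrite xj ij.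
  case: same; rewrite ij -(@ncns_noncrossing j x i y) ?jx ?lt_xi //.
by case: same; apply: (@ncns_noncrossing x i y j); rewrite ?lt_xi ?lt_iy.
Qed.
End NoncrossingPartition.

Section CrossingBlocks.
Variables (n : nat) (P : {set {set 'I_n}}).
Hypothesis P_ncns : ncns_tilde P.

Definition crossing_blocks (m : nat) : {set {set 'I_n}} :=
  [set W in P | [exists x in W, x < m] && [exists x in W, m <= x]].

Definition spanning_blocks (m : nat) : {set {set 'I_n}} :=
  [set W in P | [exists x in W, x <= m] && [exists x in W, m <= x]].

Lemma other_in_pblock x : exists2 y, y \in pblock P x & y != x.
Proof.
case/and4P: P_ncns => _ _ /forall_inP/(_ _ (pblock_ncns P_ncns x)) /card_gt1P[a [b [aV bV ab]]] _.
by case: (eqVneq a x) => [ax|]; [exists b; rewrite // -ax eq_sym | exists a].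
Qed.

Lemma other_block_neq (j : 'I_n) W x : W \in P -> W != pblock P j -> x \in W -> (x : nat) != j.
Proof.
by move=> WP Wj; rewrite val_eqE; apply: contraTneq => ->; exact: notin_other_block WP Wj.
Qed.

Lemma crossing_blocks_other (j : 'I_n) W : W != pblock P j ->
  (W \in crossing_blocks j.+1) = (W \in crossing_blocks j).
Proof.
move=> Wj; rewrite !inE; case WP: (W \in P) => //=; have neq := other_block_neq WP Wj.
by congr andb; apply: eq_existsb => x; case xW: (x \in W); rewrite //=; move: (neq x xW); lia.
Qed.

Lemma pblock_crossing_blocks (j : 'I_n) :
  (pblock P j \in crossing_blocks j) = (block_kind P j != Ann).
Proof.
have jV := mem_pblock_ncns P_ncns j.
rewrite inE pblock_ncns //=.
have -> : [exists x in pblock P j, j <= x] by apply/exists_inP; exists j.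
rewrite andbT /block_kind.
case: ifP => [/forall_inP ge_j|/forall_inPn[x xV lt_xj]] /=.
  by apply/exists_inP => -[x /ge_j]; rewrite leqNgt => /negP.
by case: ifP => // _; apply/exists_inP; exists x; rewrite // ltnNge.
Qed.

Lemma pblock_crossing_blocksS (j : 'I_n) :
  (pblock P j \in crossing_blocks j.+1) = (block_kind P j != Cre).
Proof.
have jV := mem_pblock_ncns P_ncns j.
rewrite inE pblock_ncns //=.
have -> : [exists x in pblock P j, x < j.+1] by apply/exists_inP; exists j.
rewrite /block_kind.
case: ifP => [/forall_inP ge_j|_] /=.
  have [y yV yj] := other_in_pblock j; apply/exists_inP; exists y => //.
  by rewrite ltn_neqAle ge_j // andbT eq_sym.
case: ifP => [/forall_inP le_j|/forall_inPn[x xV lt_jx]] /=.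
  by apply/exists_inP => -[x /le_j]; rewrite leqNgt => /negP.
by apply/exists_inP; exists x; rewrite // ltnNge.
Qed.

Lemma crossing_blocksD1 (j : 'I_n) :
  crossing_blocks j.+1 :\ pblock P j = crossing_blocks j :\ pblock P j.
Proof.
by apply/setP => W; rewrite !in_setD1; case: eqP => //= /eqP Wj; apply: crossing_blocks_other.
Qed.

Lemma crossing_blocks_step (j : 'I_n) :
  kind_step (block_kind P j) (Some #|crossing_blocks j.+1|) = Some #|crossing_blocks j|.
Proof.
rewrite (cardsD1 (pblock P j) (crossing_blocks j)).
rewrite (cardsD1 (pblock P j) (crossing_blocks j.+1)) crossing_blocksD1.
rewrite pblock_crossing_blocks pblock_crossing_blocksS.
by case: (block_kind P j).
Qed.

Lemma crossing_blocks_ge m : n <= m -> crossing_blocks m = set0.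
Proof.
move=> nm; apply/setP => W; rewrite !inE; apply/negP => /and3P[_ _ /exists_inP[x _]].
by rewrite leqNgt (leq_trans (ltn_ord x) nm).
Qed.

Lemma degree_drop_partition_word m :
  degree (drop m (partition_word P)) = Some #|crossing_blocks m|.
Proof.
move: {2}(n - m) (leqnn (n - m)) => k; elim: k m => [|k IH] m km.
  by rewrite drop_oversize ?size_partition_word ?crossing_blocks_ge ?cards0 //; lia.
case: (leqP n m) => nm.
  by rewrite drop_oversize ?size_partition_word ?crossing_blocks_ge ?cards0.
rewrite (drop_nth Ann) ?size_partition_word // /degree /= -/(degree _) IH; last lia.
by rewrite -[m]/(nat_of_ord (Ordinal nm)) nth_partition_word crossing_blocks_step.
Qed.

Lemma spanning_blocksE (j : 'I_n) :
  spanning_blocks j = crossing_blocks j :|: crossing_blocks j.+1.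
Proof.
have jV := mem_pblock_ncns P_ncns j.
apply/setP => W; rewrite in_setU; case: (eqVneq W (pblock P j)) => [->|Wj].
  rewrite pblock_crossing_blocks pblock_crossing_blocksS inE pblock_ncns //=.
  have -> : [exists x in pblock P j, x <= j] by apply/exists_inP; exists j.
  have -> : [exists x in pblock P j, j <= x] by apply/exists_inP; exists j.
  by case: block_kind.
rewrite crossing_blocks_other // orbb !inE; case WP: (W \in P) => //=.
have neq := other_block_neq WP Wj.
by congr andb; apply: eq_existsb => x; case xW: (x \in W); rewrite //=; move: (neq x xW); lia.
Qed.

Lemma height_partition_word m : height (partition_word P) m = #|crossing_blocks m|.
Proof. by rewrite /height degree_drop_partition_word. Qed.

Lemma level_partition_word (j : 'I_n) :
  level (height (partition_word P)) j = #|spanning_blocks j|.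
Proof.
rewrite /level !height_partition_word spanning_blocksE (cardsD1 (pblock P j) (_ :|: _)).
rewrite (cardsD1 (pblock P j) (crossing_blocks j)) (cardsD1 (pblock P j) (crossing_blocks j.+1)).
rewrite in_setU setDUl crossing_blocksD1 setUid.
case: (_ \in crossing_blocks j); case: (_ \in crossing_blocks j.+1).
all: by move: #|_ :\ _| => c /=; lia.
Qed.

Lemma crossing_blocks0 : crossing_blocks 0 = set0.
Proof. by apply/setP => W; rewrite !inE; apply/negP => /and3P[_ /exists_inP[]]. Qed.

Lemma partition_word_irreducible : 0 < n -> irreducible (partition_word P).
Proof.
move=> n0; apply/and3P; split; first by rewrite size_partition_word.
  by rewrite -[partition_word P]drop0 degree_drop_partition_word crossing_blocks0 cards0.
apply/allP => j; rewrite size_partition_word mem_iota => /andP[j1 jn].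
rewrite degree_drop_partition_word; apply/eqP => -[/eqP]; rewrite cards_eq0 => /eqP Sj0.
have n1 : n.-1 < n by lia.
pose first : 'I_n := Ordinal n0; pose last : 'I_n := Ordinal n1.
have ends : pblock P first = pblock P last.
  case/and4P: P_ncns => _ _ _ /forallP/(_ first)/forallP/(_ last)/implyP.
  by rewrite /= !eqxx => /(_ isT)/eqP.
have : pblock P first \in crossing_blocks j.
  rewrite inE pblock_ncns //=; apply/andP; split; apply/exists_inP.
    by exists first; rewrite ?mem_pblock_ncns //=; lia.
  by exists last; rewrite ?ends ?mem_pblock_ncns //=; lia.
by rewrite Sj0 inE.
Qed.

Lemma spanning_sub_crossing (i j : 'I_n) m : pblock P i = pblock P j -> i < m <= j ->
  spanning_blocks i :|: spanning_blocks j \subset crossing_blocks m.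
Proof.
move=> ij /andP[im mj]; apply/subsetP => W /setUP WT.
have WP : W \in P by case: WT; rewrite inE => /andP[].
rewrite inE WP /=; case: (eqVneq W (pblock P i)) => [->|Wi].
  apply/andP; split; apply/exists_inP; [exists i | exists j] => //.
    exact: mem_pblock_ncns.
  by rewrite ij mem_pblock_ncns.
have neqj : W != pblock P j by rewrite -ij.
have Wx x : x \in W -> pblock P x = W := pblock_ncns_of P_ncns WP.
have [x [y [xW yW /andP[xi _] /andP[_ jy]]]] :
    exists x y, [/\ x \in W, y \in W, x < i < y & x < j < y].
  have neq := other_block_neq WP.
  case: WT => /[!inE] /andP[_ /andP[/exists_inP[x xW xk] /exists_inP[y yW ky]]]; exists x, y.
    have ixy : x < i < y by move: (neq i x Wi xW) (neq i y Wi yW); lia.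
    by split=> //; apply: (ncns_nested P_ncns (i := i)); rewrite ?(Wx x) ?(Wx y) // -?ij.
  have jxy : x < j < y by move: (neq j x neqj xW) (neq j y neqj yW); lia.
  by split=> //; apply: (ncns_nested P_ncns (i := j)); rewrite ?(Wx x) ?(Wx y) // -?ij.
by apply/andP; split; apply/exists_inP; [exists x | exists y] => //; lia.
Qed.

Lemma matched_of_same_block (i j : 'I_n) : i < j -> pblock P i = pblock P j ->
  matched (height (partition_word P)) i j.
Proof.
move=> ij Vij; have sub := spanning_sub_crossing Vij.
have subT (k : 'I_n) m : m \in [:: k : nat; k.+1] -> crossing_blocks m \subset spanning_blocks k.
  by rewrite !inE spanning_blocksE => /orP[] /eqP->; rewrite ?subsetUl ?subsetUr.
apply/matchedP; rewrite !level_partition_word (minn_idPl (ltnW ij)) (maxn_idPr (ltnW ij)).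
split=> [|m hm]; last first.
  by rewrite height_partition_word subset_leq_card // (subset_trans (subsetUl _ _) (sub m hm)).
have [Sj Si1] : i < j <= j /\ i < i.+1 <= j by rewrite ltnSn leqnn ij.
apply/eqP; rewrite eqn_leq; apply/andP; split; apply: subset_leq_card.
  by rewrite (subset_trans (subsetUl _ _) (subset_trans (sub j Sj) (subT j j _))) ?mem_head.
apply: subset_trans (subsetUr _ _) (subset_trans (sub _ Si1) (subT i i.+1 _)).
by rewrite !inE eqxx orbT.
Qed.

Lemma pblock_spanning_blocks (j : 'I_n) : pblock P j \in spanning_blocks j.
Proof.
rewrite inE pblock_ncns //=.
by apply/andP; split; apply/exists_inP; exists j; rewrite ?mem_pblock_ncns.
Qed.

Lemma crossing_at_block_start (i j : 'I_n) : i < j -> ~~ [exists x in pblock P j, x <= i] ->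
  exists2 m, i < m <= j & #|crossing_blocks m| < #|spanning_blocks j|.
Proof.
move=> ij noleft; have jV := mem_pblock_ncns P_ncns j.
case: (arg_minnP (fun z : 'I_n => val z) jV) => M MV Mmin.
have iM : i < M by rewrite ltnNge; apply: contra noleft => Mi; apply/exists_inP; exists M.
have Mj : M <= j := Mmin j jV.
exists M; first by rewrite iM Mj.
apply/proper_card/(sub_proper_trans _ (properD1 (pblock_spanning_blocks j))).
apply/subsetP => W /[!inE] /andP[WP /andP[/exists_inP[x xW xM] /exists_inP[y yW My]]].
have Wx z : z \in W -> pblock P z = W := pblock_ncns_of P_ncns WP.
have WV : W != pblock P j by apply: contraTneq xW => ->; apply/negP => /Mmin; rewrite leqNgt xM.
rewrite WV WP /=; apply/andP; split; apply/exists_inP; first by exists x => //; lia.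
exists y => //; rewrite leqNgt; apply/negP => yj.
have VM : pblock P M = pblock P j := pblock_ncns_of P_ncns (pblock_ncns P_ncns j) MV.
have yM := other_block_neq WP (_ : W != pblock P M) yW; rewrite VM in yM.
have := @ncns_nested _ _ P_ncns x y M j; rewrite (Wx x) // (Wx y) // VM => /(_ erefl erefl WV).
by move: (yM WV); lia.
Qed.

Lemma crossing_at_block_end (i j : 'I_n) : i < j -> ~~ [exists y in pblock P i, j <= y] ->
  exists2 m, i < m <= j & #|crossing_blocks m| < #|spanning_blocks i|.
Proof.
move=> ij noright; have iV := mem_pblock_ncns P_ncns i.
case: (arg_maxnP (fun z : 'I_n => val z) iV) => M MV Mmax.
have {}Mmax z : z \in pblock P i -> z <= M := Mmax z.
have Mj : M < j by rewrite ltnNge; apply: contra noright => jM; apply/exists_inP; exists M.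
have iM : i <= M := Mmax i iV.
exists M.+1; first by rewrite ltnS iM Mj.
apply/proper_card/(sub_proper_trans _ (properD1 (pblock_spanning_blocks i))).
apply/subsetP => W /[!inE] /andP[WP /andP[/exists_inP[x xW xM] /exists_inP[y yW My]]].
have Wx z : z \in W -> pblock P z = W := pblock_ncns_of P_ncns WP.
have WV : W != pblock P i by apply: contraTneq yW => ->; apply/negP => /Mmax; rewrite leqNgt My.
rewrite WV WP /=; apply/andP; split; apply/exists_inP; last by exists y => //; lia.
exists x => //; rewrite leqNgt; apply/negP => ix.
have VM : pblock P M = pblock P i := pblock_ncns_of P_ncns (pblock_ncns P_ncns i) MV.
have xM' := other_block_neq WP (_ : W != pblock P M) xW; rewrite VM in xM'.
have := @ncns_nested _ _ P_ncns x y M i; rewrite (Wx x) // (Wx y) // VM => /(_ erefl erefl WV).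
by move: (xM' WV); lia.
Qed.

Lemma same_block_of_matched (i j : 'I_n) : i < j ->
  matched (height (partition_word P)) i j -> pblock P i = pblock P j.
Proof.
move=> ij /matchedP[]; rewrite !level_partition_word (minn_idPl (ltnW ij)) (maxn_idPr (ltnW ij)).
move=> lvl above; case: (eqVneq (pblock P i) (pblock P j)) => // ne; exfalso.
have low m : i < m <= j -> #|crossing_blocks m| < #|spanning_blocks i| -> False.
  by move=> /above; rewrite height_partition_word leqNgt => /negP.
case: (boolP [exists x in pblock P j, x <= i]) => [/exists_inP[x xV xi]|noleft]; last first.
  by have [m] := crossing_at_block_start ij noleft; rewrite -lvl; apply: low.
case: (boolP [exists y in pblock P i, j <= y]) => [/exists_inP[y yV jy]|noright]; last first.
  by have [m] := crossing_at_block_end ij noright; apply: low.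
have Vx : pblock P x = pblock P j := pblock_ncns_of P_ncns (pblock_ncns P_ncns j) xV.
have Vy : pblock P y = pblock P i := pblock_ncns_of P_ncns (pblock_ncns P_ncns i) yV.
have xi' : x < i by rewrite ltn_neqAle xi andbT; apply: contraNneq ne => /val_inj <-; rewrite Vx.
have := @ncns_nested _ _ P_ncns x j i y; rewrite Vx Vy eq_sym ne xi' ij => /(_ erefl erefl isT isT).
by move: jy; lia.
Qed.

Lemma eq_pblock_matched (i j : 'I_n) :
  (pblock P i == pblock P j) = matched (height (partition_word P)) i j.
Proof.
wlog ij : i j / i <= j.
  by move=> wlog; case: (leqP i j) => [|/ltnW] /wlog; rewrite // eq_sym matched_sym.
case: (ltngtP i j) ij => // [lt_ij _|/val_inj-> _]; last by rewrite eqxx matched_refl.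
by apply/eqP/idP => [/(matched_of_same_block lt_ij)|/(same_block_of_matched lt_ij)].
Qed.

End CrossingBlocks.

Lemma mem_pblock_matched n (P : {set {set 'I_n}}) (i j : 'I_n) : ncns_tilde P ->
  (j \in pblock P i) = matched (height (partition_word P)) i j.
Proof.
move=> ncP; have partP := ncns_partition ncP.
by rewrite -eq_pblock_matched // eq_pblock ?(partition_trivIset partP) ?(cover_partition partP).
Qed.

Lemma partition_word_inj n (P Q : {set {set 'I_n}}) : ncns_tilde P -> ncns_tilde Q ->
  partition_word P = partition_word Q -> P = Q.
Proof.
move=> ncP ncQ PQ.
have pblockPQ x : pblock P x = pblock Q x.
  by apply/setP => y; rewrite !mem_pblock_matched // PQ.
have sub (R S : {set {set 'I_n}}) : ncns_tilde R -> (forall x, pblock R x = pblock S x) ->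
    ncns_tilde S -> R \subset S.
  move=> ncR RS ncS; apply/subsetP => V VR.
  have /set0Pn[x xV] := partition_neq0 (ncns_partition ncR) VR.
  by rewrite -(pblock_ncns_of ncR VR xV) RS pblock_ncns.
by apply/eqP; rewrite eqEsubset !sub.
Qed.

Lemma irreducible_partition_word n w : irreducible w -> size w = n ->
  exists2 P : {set {set 'I_n}}, ncns_tilde P & partition_word P = w.
Proof.
move=> irr_w sw; have dw : degree w = Some 0 by case/and3P: irr_w => _ /eqP.
have h0 := height0 dw; have hn : height w n = 0 by rewrite -sw height_size.
have steps j : j < n -> step_spec (nth Ann w j) (height w j) (height w j.+1).
  by rewrite -sw; apply: height_steps.
exists (matching_partition n (height w)).
  by apply: (matching_partition_ncns sw h0 hn steps) => m; rewrite -sw; apply: height_pos.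
exact: (partition_word_matching sw h0 hn steps).
Qed.

Lemma perm_irreducible_partition_words n : 0 < n ->
  perm_eq [seq w <- words n | irreducible w]
          [seq partition_word P | P : {set {set 'I_n}} <- enum (@ncns_tilde n)].
Proof.
move=> n0; apply: uniq_perm; first by rewrite filter_uniq // uniq_words.
  by rewrite map_inj_in_uniq ?enum_uniq // => P Q; rewrite !mem_enum; apply: partition_word_inj.
move=> w; rewrite mem_filter mem_words; apply/andP/mapP => [[irr_w /eqP sw]|[P]].
  by have [P ncP <-] := irreducible_partition_word irr_w sw; exists P; rewrite ?mem_enum.
by rewrite mem_enum => ncP ->; rewrite size_partition_word eqxx partition_word_irreducible.
Qed.

Section Cumulants.
Variables (C : numClosedFieldType) (B : algType C).
Variables (star : B -> B) (gamma : B -> B) (phi : B -> C) (L : B -> B -> B).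
Local Open Scope ring_scope.

Lemma WM_ops_partition_word n (P : {set {set 'I_n}}) (u : 'I_n -> B) :
  WM_ops gamma phi L P u = word_ops gamma phi L (partition_word P) (map u (enum 'I_n)).
Proof.
rewrite /WM_ops /partition_word; elim: (enum 'I_n) => //= i s ->.
rewrite /block_kind.
by case: [forall j in pblock P i, (i <= j)%N]; case: [forall j in pblock P i, (j <= i)%N].
Qed.

Lemma sum_ncns_irreducible_part n (u : 'I_n -> B) : (0 < n)%N ->
  \sum_(P : {set {set 'I_n}} | ncns_tilde P) vacuum_state star gamma phi (WM_ops gamma phi L P u)
  = irreducible_part star gamma phi L (map u (enum 'I_n)).
Proof.
move=> n0; rewrite /irreducible_part size_map size_enum_ord -[RHS]big_filter.
rewrite (perm_big _ (perm_irreducible_partition_words n0)) big_map big_enum /=.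
by apply: eq_bigr => P _; rewrite WM_ops_partition_word.
Qed.

Variable Bc : seq (op B) -> C.
Hypothesis HBc : boolean_cumulants star gamma phi Bc.

Lemma boolean_cumulant_Xop us : (0 < size us)%N ->
  Bc (map (Xop gamma phi L) us) = irreducible_part star gamma phi L us.
Proof.
have [m] := ubnP (size us); elim: m us => // m IH us /ltnSE le_us_m us0.
have [n sn] : exists n, size us = n.+1 by case: (size us) us0 => // n; exists n.
have := vacuum_state_first_block HBc (_ : (0 < size (map (Xop gamma phi L) us))%N).
rewrite size_map -/(moment _ _ _ _ us) moment_first_return // => /(_ us0).
rewrite sn !big_ord_recr /= -sn !take_oversize ?drop_oversize ?size_map //.
rewrite /moment !vacuum_state_nil !mulr1.
rewrite [X in _ = X + _ -> _](eq_bigr (fun i : 'I_n =>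
  irreducible_part star gamma phi L (take i.+1 us) * moment star gamma phi L (drop i.+1 us))).
  by move=> /addrI ->.
move=> i _.
have lt_i : (i.+1 < size us)%N by rewrite sn ltnS.
by rewrite -map_take -map_drop IH ?size_takel ?(leq_trans lt_i) // ltnW.
Qed.

Lemma irreducible_part_seq1 u : irreducible_part star gamma phi L [:: u] = 0.
Proof. by rewrite /irreducible_part big_seq_cond big1 // => -[|[] []]. Qed.

End Cumulants.

Local Open Scope ring_scope.

Theorem lemma3p4 (C : numClosedFieldType) (B : algType C) (star : B -> B)
  (phi : B -> C) (gamma : B -> B) (L : B -> B -> B)
  (Hstar : star_algebra star)
  (Hphi : star_linear_functional star phi)
  (Hgamma : star_linear_map star gamma)
  (HL : star_linear_tensor star L)
  (Hpos : positive_functional star phi)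
  (Hfaith : faithful_functional star phi)
  (Hcp : completely_positive star (gamma_plus_phi gamma phi))
  (HLphi : forall b u v, phi (star v * L b u) = phi (star (L (star b) v) * u))
  (HLgamma : forall b u v,
     gamma (star v * L b u) = gamma (star (L (star b) v) * u))
  (Bc : seq (op B) -> C)
  (HBc : boolean_cumulants star gamma phi Bc) :
  (forall n (u : 'I_n -> B), (2 <= n)%N ->
     Bc [seq Xop gamma phi L (u i) | i <- enum 'I_n] =
     \sum_(P : {set {set 'I_n}} | ncns_tilde P)
        vacuum_state star gamma phi (WM_ops gamma phi L P u))
  /\ (forall u1 : B, Bc [:: Xop gamma phi L u1] = 0).
Proof.
split=> [n u n2 | u1].
  rewrite sum_ncns_irreducible_part ?(leq_trans _ n2) // (map_comp (Xop gamma phi L) u).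
  by rewrite (boolean_cumulant_Xop L HBc) // size_map size_enum_ord (leq_trans _ n2).
by rewrite (boolean_cumulant_Xop L HBc (us := [:: u1])) // irreducible_part_seq1.
Qed.
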